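(* Let $d\ge 2$ and let $K\subset\mathbb{R}^d$ be a nondegenerate $d$-simplex with vertices $a_1,\dots,a_{d+1}$, barycentric coordinates $\lambda_1,\dots,\lambda_{d+1}$, and edge vectors $e_{ij}=a_j-a_i$. Let $$Z_K=\mathbb{P}_2(K)\oplus\operatorname{span}\{\lambda_i^2\lambda_j-\lambda_i\lambda_j^2:\ 1\le i<j\le d+1\},$$ $$\Sigma_K=\{p\mapsto p(a_i),\ p\mapsto (e_{ij}\cdot\nabla p)(a_i):\ 1\le i\le d+1,\ j\ne i\}.$$ Then $\Sigma_K$ is $Z_K$-unisolvent, i.e. every $p\in Z_K$ is uniquely determined by the values of the functionals in $\Sigma_K$. Moreover, the nodal basis functions $\phi_i$ (dual to $p(a_i)$) and $\phi_{ij}$ (dual to $(e_{ij}\cdot\nabla p)(a_i)$) are $$\phi_i=\lambda_i+\sum_{j\ne i}(\lambda_i^2\lambda_j-\lambda_i\lambda_j^2),\qquad \phi_{ij}=\tfrac12\bigl(\lambda_i\lambda_j+\lambda_i^2\lambda_j-\lambda_i\lambda_j^2\bigr).$$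
   Context: $\mathbb{P}_2(K)$ denotes polynomials of total degree at most $2$ on $K$. ''Dual'' means $\phi_i(a_k)=\delta_{ik}$, $(e_{kl}\cdot\nabla\phi_i)(a_k)=0$ for all $k\ne l$, and $\phi_{ij}(a_k)=0$, $(e_{kl}\cdot\nabla\phi_{ij})(a_k)=\delta_{ik}\delta_{jl}$. *)

From mathcomp Require Import all_boot all_algebra.
From mathcomp Require Import mpoly.
Set Implicit Arguments. Unset Strict Implicit. Unset Printing Implicit Defensive.
Import GRing.Theory Num.Theory.
Local Open Scope ring_scope.

Section Defs.
Variables (R : realFieldType) (d : nat).

Definition pt := 'I_d -> R.

Definition nondeg_simplex (a : 'I_d.+1 -> pt) : Prop :=
  \det (\matrix_(i < d, k < d) (a (lift ord0 i) k - a ord0 k)) != 0.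

(* Barycentric coordinates: affine (degree <= 1) polynomials with
   lam_i(a_k) = delta_ik. *)
Definition barycentric (a : 'I_d.+1 -> pt) (lam : 'I_d.+1 -> {mpoly R[d]}) : Prop :=
  (forall i, (msize (lam i) <= 2)%N) /\
  (forall i k, (lam i).@[a k] = (i == k)%:R).

Definition edge (a : 'I_d.+1 -> pt) (i j : 'I_d.+1) : pt := fun k => a j k - a i k.

Definition dderiv (e : pt) (p : {mpoly R[d]}) : {mpoly R[d]} :=
  \sum_(k < d) e k *: p^`M(k).

Definition bub (lam : 'I_d.+1 -> {mpoly R[d]}) (i j : 'I_d.+1) : {mpoly R[d]} :=
  lam i ^+ 2 * lam j - lam i * lam j ^+ 2.

Definition inP2 (p : {mpoly R[d]}) : Prop := (msize p <= 3)%N.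

Definition inZ (lam : 'I_d.+1 -> {mpoly R[d]}) (p : {mpoly R[d]}) : Prop :=
  exists (q : {mpoly R[d]}) (c : 'I_d.+1 -> 'I_d.+1 -> R),
    inP2 q /\ p = q + \sum_(i < d.+1) \sum_(j < d.+1 | (i < j)%N) c i j *: bub lam i j.

Definition phi_v (lam : 'I_d.+1 -> {mpoly R[d]}) (i : 'I_d.+1) : {mpoly R[d]} :=
  lam i + \sum_(j < d.+1 | j != i) bub lam i j.

Definition phi_e (lam : 'I_d.+1 -> {mpoly R[d]}) (i j : 'I_d.+1) : {mpoly R[d]} :=
  2^-1 *: (lam i * lam j + bub lam i j).

End Defs.

From HB Require Import structures.
From mathcomp Require Import all_boot all_algebra.
From mathcomp Require Import mpoly.
From mathcomp Require Import ring lra.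
Set Implicit Arguments. Unset Strict Implicit. Unset Printing Implicit Defensive.
Import GRing.Theory Num.Theory.
Local Open Scope ring_scope.

(* Write p in Z_K as q + S with q quadratic and S a combination of the bubbles
   b_xy = λ_x^2 λ_y - λ_x λ_y^2.  The bubbles vanish at the vertices, and the
   derivative of b_xy along e_kl at a_k is δ_xk δ_yl - δ_xl δ_yk, which is
   antisymmetric in (k, l).  A quadratic obeys the trapezoidal rule
   D_e q(x) + D_e q(x + e) = 2 (q(x + e) - q(x)), as D_e q is affine.  So if all
   degrees of freedom of p vanish, q vanishes at the vertices, and on each edge
   the trapezoidal rule together with the antisymmetry kills both the bubble
   coefficients and the edge derivatives of q.  Such a q is 0: every D_{e_kl} q
   is affine and vanishes at all vertices (e_kl = e_ml - e_mk), hence is 0; the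
   edges at the first vertex span R^d, so q is constant.  The dual basis is
   checked directly from λ_i(a_k) = δ_ik and D_{e_kl} λ_i = δ_il - δ_ik, and
   yields existence. *)

Lemma mnm_neq0 n (m : 'X_{1..n}) : m != 0%MM -> exists i, m i != 0%N.
Proof.
move=> m0; apply/existsP; apply: contraR m0 => /existsPn m0.
by apply/eqP/mnmP => i; rewrite mnmE; apply/eqP; rewrite -[_ == _]negbK.
Qed.

Lemma meval_sum (R : comNzRingType) n (x : 'I_n -> R) (I : Type) (r : seq I)
    (Q : pred I) (F : I -> {mpoly R[n]}) :
  (\sum_(i <- r | Q i) F i).@[x] = \sum_(i <- r | Q i) (F i).@[x].
Proof. exact: raddf_sum. Qed.

Lemma mderiv_eq0_mpolyC (R : numDomainType) n (p : {mpoly R[n]}) :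
  (forall i, p^`M(i) = 0) -> p = (p@_0)%:MP.
Proof.
move=> dp0; apply/mpolyP => m; rewrite mcoeffC.
have [->|m0] := eqVneq m 0%MM; first by rewrite mulr1.
have [i mi] := mnm_neq0 m0.
have -> : m = (m - U_(i) + U_(i))%MM by rewrite submK // lep1mP.
have := mcoeff_deriv i (m - U_(i))%MM p; rewrite dp0 mcoeff0 => /esym/eqP.
by rewrite mulrn_eq0 /= mulr0 => /eqP.
Qed.

Lemma eq_and_neq (T : eqType) (x y k : T) : x != y -> (x == k) && (y == k) = false.
Proof. by move=> xy; apply/negbTE; apply: contra xy => /andP[/eqP-> /eqP->]. Qed.

Lemma sum_delta_neq (I : finType) (R : pzSemiRingType) (i l : I) :
  \sum_(j | j != i) ((j == l)%:R : R) = (l != i)%:R.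
Proof.
have [->|li] := eqVneq l i; first by rewrite big1 // => j /negbTE ->.
by rewrite (bigD1 l) //= eqxx big1 ?addr0 // => j /andP [_ /negbTE ->].
Qed.

Section DirectionalDerivative.
Variables (R : realFieldType) (d : nat).
Local Notation P := {mpoly R[d]}.
Implicit Types (p q : P) (e : pt R d).

Lemma dderiv_is_linear e : linear (dderiv e).
Proof.
move=> c p q; rewrite /dderiv scaler_sumr -big_split; apply: eq_bigr => k _ /=.
by rewrite mderivD mderivZ scalerDr !scalerA mulrC.
Qed.

HB.instance Definition _ e :=
  GRing.isLinear.Build R P P _ (dderiv e) (dderiv_is_linear e).

Lemma dderiv0 e : dderiv e 0 = 0. Proof. exact: raddf0. Qed.
Lemma dderivD e : {morph dderiv e : p q / p + q}. Proof. exact: raddfD. Qed.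
Lemma dderivB e : {morph dderiv e : p q / p - q}. Proof. exact: raddfB. Qed.
Lemma dderivZ e c p : dderiv e (c *: p) = c *: dderiv e p.
Proof. exact: linearZ. Qed.
Lemma dderiv_sum e (I : Type) (r : seq I) (Q : pred I) (F : I -> P) :
  dderiv e (\sum_(i <- r | Q i) F i) = \sum_(i <- r | Q i) dderiv e (F i).
Proof. exact: raddf_sum. Qed.

Lemma dderivC e c : dderiv e c%:MP = 0.
Proof. by rewrite /dderiv big1 // => k _; rewrite mderivC scaler0. Qed.

Lemma dderivX e j : dderiv e 'X_j = (e j)%:MP.
Proof.
rewrite /dderiv (bigD1 j) //= big1 => [|k kj].
  rewrite mderivX mnm1E eqxx.
  have -> : (U_(j) - U_(j) = 0)%MM by apply/mnmP => i; rewrite !mnmE subnn.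
  by rewrite mpolyX0 scale1r addr0 -alg_mpolyC.
by rewrite mderivX mnm1E eq_sym (negbTE kj) scale0r scaler0.
Qed.

Lemma dderivM e p q : dderiv e (p * q) = dderiv e p * q + p * dderiv e q.
Proof.
rewrite /dderiv; under eq_bigr do rewrite mderivM scalerDr.
rewrite big_split /= mulr_suml mulr_sumr.
by congr (_ + _); apply: eq_bigr => k _; [rewrite scalerAl | rewrite scalerAr].
Qed.

Lemma eq_dderiv e1 e2 : e1 =1 e2 -> dderiv e1 =1 dderiv e2.
Proof. by move=> e12 p; apply: eq_bigr => k _; rewrite e12. Qed.

Lemma dderivNdir e p : dderiv (fun k => - e k) p = - dderiv e p.
Proof. by rewrite /dderiv -sumrN; apply: eq_bigr => k _; rewrite scaleNr. Qed.

Lemma dderivBdir e1 e2 p :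
  dderiv (fun k => e1 k - e2 k) p = dderiv e1 p - dderiv e2 p.
Proof. by rewrite /dderiv -sumrB; apply: eq_bigr => k _; rewrite scalerBl. Qed.

Lemma dderiv_sumdir (I : finType) (mu : I -> R) (E : I -> pt R d) p :
  dderiv (fun k => \sum_l mu l * E l k) p = \sum_l mu l *: dderiv (E l) p.
Proof.
rewrite /dderiv; under eq_bigr do rewrite scaler_suml.
rewrite exchange_big; apply: eq_bigr => l _; rewrite scaler_sumr.
by apply: eq_bigr => k _; rewrite scalerA.
Qed.

Lemma dderiv_unitdir j p : dderiv (fun k => (j == k)%:R) p = p^`M(j).
Proof.
rewrite /dderiv (bigD1 j) //= eqxx scale1r big1 ?addr0 // => k kj.
by rewrite eq_sym (negbTE kj) scale0r.
Qed.

End DirectionalDerivative.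

Section LowDegree.
Variables (R : realFieldType) (d : nat).
Local Notation P := {mpoly R[d]}.
Implicit Types (p q f g : P) (e x : pt R d).

(* degree at most 1: [msize] is the total degree plus one *)
Definition inP1 p : Prop := (msize p <= 2)%N.

Lemma inP1C c : inP1 c%:MP.
Proof. by rewrite /inP1 msizeC; case: (c == 0). Qed.

Lemma inP1D f g : inP1 f -> inP1 g -> inP1 (f + g).
Proof. by rewrite /inP1 => hf hg; rewrite (leq_trans (msizeD_le _ _)) // geq_max hf. Qed.

Lemma inP1Z c f : inP1 f -> inP1 (c *: f).
Proof. exact: leq_trans (msizeZ_le _ _). Qed.

Lemma inP1_mulC c f : inP1 f -> inP1 (c%:MP * f).
Proof. by rewrite -alg_mpolyC mulr_algl; apply: inP1Z. Qed.

Lemma inP1E f : inP1 f -> f = (f@_0)%:MP + \sum_k f@_U_(k) *: 'X_k.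
Proof.
rewrite /inP1 => hf; apply/mpolyP => m; rewrite mcoeffD mcoeffC raddf_sum /=.
under eq_bigr do rewrite mcoeffZ mcoeffX.
have [->|m0] := eqVneq m 0%MM.
  by rewrite mulr1 big1 ?addr0 // => k _; rewrite mnm1_eq0 mulr0.
rewrite mulr0 add0r.
have [/mdeg1P [i /eqP ->]|m1] := boolP (mdeg m == 1%N).
  rewrite (bigD1 i) //= eqxx mulr1 big1 ?addr0 // => k /negbTE ki.
  by rewrite eq_mnm1 ki mulr0.
rewrite big1 => [|k _].
  apply/eqP; rewrite mcoeff_eq0; apply: msize_mdeg_ge; apply: leq_trans hf _.
  by move: m1 m0; rewrite -mdeg_eq0; case: (mdeg m) => [|[|]].
suff -> : (U_(k)%MM == m) = false by rewrite mulr0.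
by apply: contraNF m1 => /eqP <-; rewrite mdeg1.
Qed.

Lemma meval_P1 f x : inP1 f -> f.@[x] = f@_0 + \sum_k f@_U_(k) * x k.
Proof.
move=> /inP1E {1}->; rewrite mevalD mevalC meval_sum.
by congr (_ + _); apply: eq_bigr => k _; rewrite mevalZ mevalXU.
Qed.

Lemma dderiv_P1 f e x :
  inP1 f -> dderiv e f = (f.@[fun k => x k + e k] - f.@[x])%:MP.
Proof.
move=> hf; rewrite !meval_P1 // {1}(inP1E hf) dderivD dderiv_sum dderivC add0r.
rewrite opprD addrACA subrr add0r -sumrB -alg_mpolyC scaler_suml.
by apply: eq_bigr => k _; rewrite dderivZ dderivX -alg_mpolyC scalerA mulrDr addrC addKr.
Qed.

Lemma mpolyX_mul_P1 (m : 'X_{1..d}) :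
  (mdeg m < 3)%N -> exists f g, [/\ inP1 f, inP1 g & 'X_[m] = f * g].
Proof.
move=> m3; have [->|m0] := eqVneq m 0%MM.
  by exists 1, 1; rewrite mpolyX0 mulr1 -mpolyC1; split => //; apply: inP1C.
have [i mi] := mnm_neq0 m0.
have mE : m = (m - U_(i) + U_(i))%MM by rewrite submK // lep1mP.
exists 'X_[m - U_(i)], 'X_i; split; last by rewrite {1}mE mpolyXD.
  by move: m3; rewrite {1}mE mdegD mdeg1 addn1 ltnS /inP1 msizeX.
by rewrite /inP1 msizeX mdeg1.
Qed.

Lemma inP2_ind (Q : P -> Prop) :
  Q 0 -> (forall c p q, Q p -> Q q -> Q (c *: p + q)) ->
  (forall f g, inP1 f -> inP1 g -> Q (f * g)) ->
  forall q, inP2 q -> Q q.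
Proof.
move=> Q0 Qlin Qmul q hq; rewrite (mpolyE q).
have : all (fun m => mdeg m < 3)%N (msupp q).
  by apply/allP => m /msize_mdeg_lt /leq_trans; apply.
elim: (msupp q) => [|m s IH]; first by rewrite big_nil.
rewrite /= big_cons => /andP [m3 /IH Qs]; apply: Qlin => //.
by have [f [g [hf hg ->]]] := mpolyX_mul_P1 m3; apply: Qmul.
Qed.

Lemma dderiv_P2 q e : inP2 q -> inP1 (dderiv e q).
Proof.
move: q; apply: inP2_ind => [|c p q hp hq|f g hf hg].
- by rewrite dderiv0 -mpolyC0; apply: inP1C.
- by rewrite dderivD dderivZ; apply: inP1D; first apply: inP1Z.
rewrite dderivM (dderiv_P1 e (fun _ => 0) hf) (dderiv_P1 e (fun _ => 0) hg) [f * _]mulrC.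
by apply: inP1D; apply: inP1_mulC.
Qed.

Lemma dderiv_P2_trapezoid q e x : inP2 q ->
  (dderiv e q).@[x] + (dderiv e q).@[fun k => x k + e k]
  = 2 * (q.@[fun k => x k + e k] - q.@[x]).
Proof.
move: q; apply: inP2_ind => [|c p q hp hq|f g hf hg].
- by rewrite dderiv0 !meval0 subrr mulr0 addr0.
- by rewrite dderivD dderivZ !mevalD !mevalZ addrACA -mulrDr hp hq; ring.
rewrite dderivM (dderiv_P1 e x hf) (dderiv_P1 e x hg).
by rewrite !mevalD !mevalM !mevalC; ring.
Qed.

Lemma inP2_mulP1 f g : inP1 f -> inP1 g -> inP2 (f * g).
Proof.
have [->|f0] := eqVneq f 0; first by rewrite mul0r /inP2 msize0.
have [->|g0] := eqVneq g 0; first by rewrite mulr0 /inP2 msize0.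
rewrite /inP1 /inP2 msizeM // => hf hg.
by case: (msize f) hf => [|[|[|]]] //; case: (msize g) hg => [|[|[|]]].
Qed.

End LowDegree.

Section Simplex.
Variables (R : realFieldType) (d : nat) (a : 'I_d.+1 -> pt R d).
Hypothesis hK : nondeg_simplex a.
Local Notation P := {mpoly R[d]}.
Implicit Types (p q : P) (k l m : 'I_d.+1).

Local Notation edgemx := (\matrix_(i < d, k < d) (a (lift ord0 i) k - a ord0 k)).

Lemma edgemx_unit : edgemx \in unitmx.
Proof. by rewrite unitmxE unitfE. Qed.

Lemma edge_shift k l : (fun j => a k j + edge a k l j) =1 a l.
Proof. by move=> j; rewrite /edge addrC subrK. Qed.

Lemma dderiv_edgeC k l p : dderiv (edge a l k) p = - dderiv (edge a k l) p.
Proof. by rewrite -dderivNdir; apply: eq_dderiv => j; rewrite /edge opprB. Qed.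

Lemma dderiv_edge_via m k l p :
  dderiv (edge a k l) p = dderiv (edge a m l) p - dderiv (edge a m k) p.
Proof.
by rewrite -dderivBdir; apply: eq_dderiv => j; rewrite /edge opprB addrA subrK.
Qed.

Lemma P1_eq0_vertices (f : P) : inP1 f -> (forall k, f.@[a k] = 0) -> f = 0.
Proof.
move=> hf f0; pose c : 'cV[R]_d := \col_k f@_U_(k).
have edgemx_c : edgemx *m c = 0.
  apply/matrixP => i j; rewrite !mxE.
  transitivity (f.@[a (lift ord0 i)] - f.@[a ord0]); last by rewrite !f0 subrr.
  rewrite !meval_P1 // opprD addrACA subrr add0r -sumrB.
  by apply: eq_bigr => k _; rewrite !mxE mulrC mulrBr.
have c0 : c = 0 by rewrite -(mulKmx edgemx_unit c) edgemx_c mulmx0.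
have fC : f = (f@_0)%:MP.
  rewrite {1}(inP1E hf) big1 ?addr0 // => k _.
  have := congr1 (fun v : 'cV[R]_d => v k ord0) c0.
  by rewrite !mxE => ->; rewrite scale0r.
by move: (f0 ord0); rewrite fC mevalC => ->; rewrite mpolyC0.
Qed.

Lemma mderiv_eq0_edges p :
  (forall i, dderiv (edge a ord0 (lift ord0 i)) p = 0) -> forall j, p^`M(j) = 0.
Proof.
move=> dp0 j; rewrite -dderiv_unitdir.
have unitdirE (k : 'I_d) :
    (j == k)%:R = \sum_i invmx edgemx j i * edge a ord0 (lift ord0 i) k.
  have := congr1 (fun A : 'M[R]_d => A j k) (mulVmx edgemx_unit).
  by rewrite /= !mxE => <-; apply: eq_bigr => i _; rewrite !mxE.
rewrite (eq_dderiv unitdirE) dderiv_sumdir.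
by rewrite big1 // => i _; rewrite dp0 scaler0.
Qed.

Lemma P2_eq0_dofs q : inP2 q -> (forall k, q.@[a k] = 0) ->
  (forall k l, k != l -> (dderiv (edge a k l) q).@[a k] = 0) -> q = 0.
Proof.
move=> hq q0 dq0.
have dq_edge0 k l : k != l -> dderiv (edge a k l) q = 0.
  move=> kl; apply: P1_eq0_vertices; first exact: dderiv_P2.
  move=> m; have [->|mk] := eqVneq m k; first exact: dq0.
  have [->|ml] := eqVneq m l; first by rewrite dderiv_edgeC mevalN dq0 ?oppr0 // eq_sym.
  by rewrite (dderiv_edge_via m) mevalB !dq0 ?subrr.
have qC : q = (q@_0)%:MP.
  apply: mderiv_eq0_mpolyC; apply: mderiv_eq0_edges => i.
  by apply: dq_edge0; rewrite neq_lift.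
by move: (q0 ord0); rewrite qC mevalC => ->; rewrite mpolyC0.
Qed.

End Simplex.

Section BubbleSpace.
Variables (R : realFieldType) (d : nat) (lam : 'I_d.+1 -> {mpoly R[d]}).
Local Notation P := {mpoly R[d]}.
Implicit Types (p q : P) (k l x y : 'I_d.+1).

Lemma bubC x y : bub lam x y = - bub lam y x.
Proof. by rewrite /bub; ring. Qed.

Lemma inZ_lin c p q : inZ lam p -> inZ lam q -> inZ lam (c *: p + q).
Proof.
move=> [p2 [cp [hp2 ->]]] [q2 [cq [hq2 ->]]].
exists (c *: p2 + q2), (fun x y => c * cp x y + cq x y); split.
  rewrite /inP2 (leq_trans (msizeD_le _ _)) // geq_max hq2 andbT.
  exact: leq_trans (msizeZ_le _ _) hp2.
rewrite scalerDr addrACA; congr (_ + _).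
rewrite scaler_sumr -big_split; apply: eq_bigr => x _.
rewrite scaler_sumr -big_split; apply: eq_bigr => y _.
by rewrite scalerDl scalerA.
Qed.

Lemma inZ_P2 q : inP2 q -> inZ lam q.
Proof.
move=> hq; exists q, (fun _ _ => 0); split => //.
by rewrite big1 ?addr0 // => x _; rewrite big1 // => y _; rewrite scale0r.
Qed.

Lemma inZ0 : inZ lam 0.
Proof. by apply: inZ_P2; rewrite /inP2 msize0. Qed.

Lemma inZD p q : inZ lam p -> inZ lam q -> inZ lam (p + q).
Proof. by rewrite -{2}[p]scale1r; apply: inZ_lin. Qed.

Lemma inZZ c p : inZ lam p -> inZ lam (c *: p).
Proof. by move=> hp; rewrite -[_ *: _]addr0; apply: inZ_lin => //; apply: inZ0. Qed.

Lemma inZ_sum (I : Type) (r : seq I) (Pr : pred I) (F : I -> P) :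
  (forall i, Pr i -> inZ lam (F i)) -> inZ lam (\sum_(i <- r | Pr i) F i).
Proof. by move=> hF; apply: big_ind => //; [apply: inZ0 | apply: inZD]. Qed.

Lemma inZ_bub x y : x != y -> inZ lam (bub lam x y).
Proof.
move=> xy; wlog lt_xy : x y xy / (x < y)%N => [hwlog|].
  have [|yx|/val_inj exy] := ltngtP x y; first exact: hwlog.
    by rewrite bubC -scaleN1r; apply/inZZ/hwlog; rewrite // eq_sym.
  by rewrite exy eqxx in xy.
exists 0, (fun u v => ((u == x) && (v == y))%:R); split; first by rewrite /inP2 msize0.
rewrite add0r (bigD1 x) //= (bigD1 y) //= !eqxx /= scale1r.
rewrite big1 => [|v /andP [_ /negbTE ->]]; last by rewrite scale0r.
rewrite addr0 big1 ?addr0 // => u /negbTE ux; rewrite big1 // => v _.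
by rewrite ux scale0r.
Qed.

Definition bubble_slope (c : 'I_d.+1 -> 'I_d.+1 -> R) k l : R :=
  \sum_(x < d.+1) \sum_(y < d.+1 | (x < y)%N)
    c x y * (((x == k) && (y == l))%:R - ((x == l) && (y == k))%:R).

Lemma bubble_slopeC c k l : bubble_slope c l k = - bubble_slope c k l.
Proof.
rewrite /bubble_slope -sumrN; apply: eq_bigr => x _.
by rewrite -sumrN; apply: eq_bigr => y _; rewrite -mulrN opprB.
Qed.

Lemma bubble_slope_lt c x y : (x < y)%N -> bubble_slope c x y = c x y.
Proof.
move=> xy; have /negbTE nxy : x != y by rewrite neq_ltn xy.
rewrite /bubble_slope (bigD1 x) //= (bigD1 y) //= !eqxx nxy /= subr0 mulr1.
rewrite big1 => [|v /andP [_ /negbTE ->]]; last by rewrite /= subrr mulr0.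
rewrite addr0 big1 ?addr0 // => u /negbTE ux; rewrite big1 // => v uv.
rewrite ux /=; have [uy|] := eqVneq u y; last by rewrite subrr mulr0.
have [vx|] := eqVneq v x; last by rewrite andbF subrr mulr0.
by move: uv; rewrite uy vx ltnNge ltnW.
Qed.

End BubbleSpace.

Section Barycentric.
Variables (R : realFieldType) (d : nat) (a : 'I_d.+1 -> pt R d).
Variable lam : 'I_d.+1 -> {mpoly R[d]}.
Hypotheses (hK : nondeg_simplex a) (hlam : barycentric a lam).
Local Notation P := {mpoly R[d]}.
Implicit Types (p q : P) (k l m x y : 'I_d.+1).

Lemma inP1_lam m : inP1 (lam m).
Proof. exact: hlam.1. Qed.

Lemma lam_vertex m k : (lam m).@[a k] = (m == k)%:R.
Proof. exact: hlam.2. Qed.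

Lemma dderiv_lam m k l :
  dderiv (edge a k l) (lam m) = ((m == l)%:R - (m == k)%:R)%:MP.
Proof.
rewrite (dderiv_P1 _ (a k) (inP1_lam m)) (meval_eq _ (edge_shift a k l)).
by rewrite !lam_vertex.
Qed.

Lemma bub_vertex x y k : x != y -> (bub lam x y).@[a k] = 0.
Proof.
move=> xy; rewrite /bub !expr2 !mevalB !mevalM !lam_vertex.
by move: (eq_and_neq k xy); case: (x == k); case: (y == k) => //= _; ring.
Qed.

Lemma dderiv_bub_vertex x y k l : x != y ->
  (dderiv (edge a k l) (bub lam x y)).@[a k] =
  ((x == k) && (y == l))%:R - ((x == l) && (y == k))%:R.
Proof.
move=> xy; rewrite /bub dderivB !expr2 !dderivM !dderiv_lam.
rewrite !(mevalB, mevalD, mevalM, mevalC, lam_vertex).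
move: (eq_and_neq k xy) (eq_and_neq l xy).
by case: (x == k); case: (y == k); case: (x == l); case: (y == l) => //= _ _; ring.
Qed.

Lemma dderiv_bubbles_vertex (c : 'I_d.+1 -> 'I_d.+1 -> R) k l :
  (dderiv (edge a k l)
     (\sum_(x < d.+1) \sum_(y < d.+1 | (x < y)%N) c x y *: bub lam x y)).@[a k]
  = bubble_slope c k l.
Proof.
rewrite /bubble_slope dderiv_sum meval_sum; apply: eq_bigr => x _.
rewrite dderiv_sum meval_sum; apply: eq_bigr => y xy.
by rewrite dderivZ mevalZ dderiv_bub_vertex // neq_ltn xy.
Qed.

Lemma inZ_eq0_dofs p : inZ lam p -> (forall k, p.@[a k] = 0) ->
  (forall k l, k != l -> (dderiv (edge a k l) p).@[a k] = 0) -> p = 0.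
Proof.
move=> [q [c [hq pE]]] p0 dp0.
set S := \sum_(x < d.+1) _ in pE.
have S0 k : S.@[a k] = 0.
  rewrite meval_sum big1 // => x _; rewrite meval_sum big1 // => y xy.
  by rewrite mevalZ bub_vertex ?mulr0 // neq_ltn xy.
have q0 k : q.@[a k] = 0 by have := p0 k; rewrite pE mevalD S0 addr0.
have dq_slope k l : k != l ->
    (dderiv (edge a k l) q).@[a k] + bubble_slope c k l = 0.
  by move=> kl; rewrite -dderiv_bubbles_vertex -mevalD -dderivD -pE dp0.
(* The trapezoidal rule ties the derivatives at both ends of an edge, while
   the bubbles contribute antisymmetrically: both parts must vanish. *)
have slope0 k l : k != l ->
    (dderiv (edge a k l) q).@[a k] = 0 /\ bubble_slope c k l = 0.
  move=> kl; have := dq_slope l k; rewrite eq_sym => /(_ kl).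
  rewrite dderiv_edgeC mevalN bubble_slopeC.
  have := dderiv_P2_trapezoid (edge a k l) (a k) hq.
  rewrite !(meval_eq _ (edge_shift a k l)) !q0 subrr mulr0.
  by move: (dq_slope k l kl); lra.
have q_eq0 : q = 0 by apply: (P2_eq0_dofs hK) => // k l /slope0[].
have S_eq0 : S = 0.
  rewrite /S big1 // => x _; rewrite big1 // => y xy.
  by rewrite -bubble_slope_lt // (slope0 x y _).2 ?scale0r // neq_ltn xy.
by rewrite pE q_eq0 S_eq0 addr0.
Qed.

Lemma inZ_eq_dofs p q : inZ lam p -> inZ lam q ->
  (forall k, p.@[a k] = q.@[a k]) ->
  (forall k l, k != l ->
     (dderiv (edge a k l) p).@[a k] = (dderiv (edge a k l) q).@[a k]) -> p = q.
Proof.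
move=> pZ qZ pq dpq; apply/eqP; rewrite -subr_eq0; apply/eqP.
apply: inZ_eq0_dofs => [|k|k l kl].
- by rewrite -scaleN1r addrC; apply: inZ_lin.
- by rewrite mevalB pq subrr.
- by rewrite dderivB mevalB dpq ?subrr.
Qed.

Lemma phi_v_inZ i : inZ lam (phi_v lam i).
Proof.
apply: inZD; first by apply/inZ_P2/(leq_trans (inP1_lam i)).
by apply: inZ_sum => j ji; apply: inZ_bub; rewrite eq_sym.
Qed.

Lemma phi_v_vertex i k : (phi_v lam i).@[a k] = (i == k)%:R.
Proof.
rewrite mevalD lam_vertex meval_sum big1 ?addr0 // => j ji.
by rewrite bub_vertex // eq_sym.
Qed.

Lemma dderiv_phi_v_vertex i k l : k != l ->
  (dderiv (edge a k l) (phi_v lam i)).@[a k] = 0.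
Proof.
move=> kl; rewrite dderivD dderiv_sum dderiv_lam mevalD mevalC meval_sum.
have bub_slope j : j != i -> (dderiv (edge a k l) (bub lam i j)).@[a k] =
    (i == k)%:R * (j == l)%:R - (i == l)%:R * (j == k)%:R.
  by move=> ji; rewrite dderiv_bub_vertex -?mulnb ?natrM // eq_sym.
rewrite (eq_bigr _ bub_slope).
rewrite sumrB -!mulr_sumr !sum_delta_neq ![_ == i]eq_sym.
move: (eq_and_neq i kl); rewrite ![_ == i]eq_sym.
by case: (i == k); case: (i == l) => //= _; ring.
Qed.

Lemma phi_e_inZ i j : i != j -> inZ lam (phi_e lam i j).
Proof.
move=> ij; apply/inZZ/inZD; last exact: inZ_bub.
by apply/inZ_P2/inP2_mulP1; apply: inP1_lam.
Qed.

Lemma phi_e_vertex i j k : i != j -> (phi_e lam i j).@[a k] = 0.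
Proof.
move=> ij; rewrite mevalZ mevalD mevalM !lam_vertex bub_vertex //.
by move: (eq_and_neq k ij); case: (i == k); case: (j == k) => //= _; ring.
Qed.

Lemma dderiv_phi_e_vertex i j k l : i != j -> k != l ->
  (dderiv (edge a k l) (phi_e lam i j)).@[a k] = ((i == k) && (j == l))%:R.
Proof.
move=> ij kl; rewrite dderivZ dderivD dderivM !dderiv_lam mevalZ mevalD.
rewrite dderiv_bub_vertex // !(mevalD, mevalM, mevalC, lam_vertex).
move: (eq_and_neq k ij) (eq_and_neq l ij) (eq_and_neq i kl) (eq_and_neq j kl).
rewrite ![_ == i]eq_sym ![_ == j]eq_sym.
case: (i == k); case: (j == k); case: (i == l); case: (j == l) => //= _ _ _ _.
all: by field.
Qed.

Definition interpolant (f : 'I_d.+1 -> R) (g : 'I_d.+1 -> 'I_d.+1 -> R) : P :=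
  \sum_m f m *: phi_v lam m + \sum_m \sum_(n | n != m) g m n *: phi_e lam m n.

Lemma interpolant_inZ f g : inZ lam (interpolant f g).
Proof.
apply: inZD; apply: inZ_sum => m _; first exact/inZZ/phi_v_inZ.
by apply: inZ_sum => n nm; apply/inZZ/phi_e_inZ; rewrite eq_sym.
Qed.

Lemma interpolant_vertex f g k : (interpolant f g).@[a k] = f k.
Proof.
rewrite mevalD !meval_sum [X in _ + X]big1 ?addr0 => [|m _]; last first.
  by rewrite meval_sum big1 // => n nm; rewrite mevalZ phi_e_vertex ?mulr0 // eq_sym.
rewrite (bigD1 k) //= mevalZ phi_v_vertex eqxx mulr1 big1 ?addr0 // => m /negbTE mk.
by rewrite mevalZ phi_v_vertex mk mulr0.
Qed.

Lemma dderiv_interpolant_vertex f g k l : k != l ->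
  (dderiv (edge a k l) (interpolant f g)).@[a k] = g k l.
Proof.
move=> kl; rewrite dderivD !dderiv_sum mevalD !meval_sum.
rewrite big1 ?add0r => [|m _]; last by rewrite dderivZ mevalZ dderiv_phi_v_vertex ?mulr0.
under eq_bigr => m _ do rewrite dderiv_sum meval_sum.
have lk : l != k by rewrite eq_sym.
rewrite (bigD1 k) //= (bigD1 l) //= dderivZ mevalZ dderiv_phi_e_vertex //.
rewrite !eqxx mulr1 big1 ?addr0 => [|n /andP [nk /negbTE nl]]; last first.
  by rewrite dderivZ mevalZ dderiv_phi_e_vertex ?nl ?andbF ?mulr0 // eq_sym.
rewrite big1 ?addr0 // => m /negbTE mk; rewrite big1 // => n nm.
by rewrite dderivZ mevalZ dderiv_phi_e_vertex ?mk ?mulr0 // eq_sym.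
Qed.

End Barycentric.

Unset Implicit Arguments.
Set Strict Implicit.

Theorem mainTheorem1 (R : realFieldType) (d : nat) (hd : (2 <= d)%N)
    (a : 'I_d.+1 -> pt R d) (lam : 'I_d.+1 -> {mpoly R[d]})
    (hK : nondeg_simplex a) (hlam : barycentric a lam) :
  (* unisolvence: every assignment of values to the functionals in Sigma_K
     is attained by exactly one p in Z_K *)
  (forall (f : 'I_d.+1 -> R) (g : 'I_d.+1 -> 'I_d.+1 -> R),
     exists! p : {mpoly R[d]},
       [/\ inZ lam p,
           forall i, p.@[a i] = f i &
           forall i j, i != j -> (dderiv (edge a i j) p).@[a i] = g i j])
  /\
  (* nodal basis functions *)
  (forall i, inZ lam (phi_v lam i) /\
     (forall k, (phi_v lam i).@[a k] = (i == k)%:R) /\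
     (forall k l, k != l -> (dderiv (edge a k l) (phi_v lam i)).@[a k] = 0))
  /\
  (forall i j, i != j -> inZ lam (phi_e lam i j) /\
     (forall k, (phi_e lam i j).@[a k] = 0) /\
     (forall k l, k != l ->
        (dderiv (edge a k l) (phi_e lam i j)).@[a k] = ((i == k) && (j == l))%:R)).
Proof.
split; last split.
- move=> f g; exists (interpolant lam f g); split.
    split; [exact: interpolant_inZ hlam f g | exact: interpolant_vertex hlam f g
           | exact: dderiv_interpolant_vertex hlam f g].
  move=> p [pZ pf pg]; apply: (inZ_eq_dofs hK hlam) => // [|k|k l kl].
  + exact: interpolant_inZ hlam f g.
  + by rewrite interpolant_vertex.
  + by rewrite dderiv_interpolant_vertex ?pg.
- move=> i; split; last split=> [k | k l kl].
  + exact: phi_v_inZ hlam i.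
  + exact: phi_v_vertex hlam i k.
  + exact: dderiv_phi_v_vertex hlam i k l kl.
- move=> i j ij; split; last split=> [k | k l kl].
  + exact: phi_e_inZ hlam i j ij.
  + exact: phi_e_vertex hlam i j k ij.
  + exact: dderiv_phi_e_vertex hlam i j k l ij kl.
Qed.
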